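(* Let $D$ be a strong nonseparable digraph and let $(D_0,D_1,\ldots,D_k)$ be an ear decomposition of $D$. Let $i\in\{0,\ldots,k-1\}$ and let $P_i=(x_0,x_1,\ldots,x_{r-1},x_r)$ be the ear of $D_i$ in $D$ (so $D_{i+1}=D_i\cup P_i$), with $l(P_i)\geq 2$. If $D_i$ has a kernel $N$ but $D_{i+1}$ has no kernel, then one of the following holds: (1) $x_0,x_r\in N$ and $l(P_i)$ is odd; (2) $x_0\in N$, $x_r\notin N$ and $l(P_i)$ is even.
   Context: All digraphs are finite, without loops or multiple arcs. Paths and cycles are directed; the length $l(P)$ of a path $P$ is its number of arcs. A digraph is strong if for every ordered pair of vertices $x,y$ there is a directed path from $x$ to $y$; it is nonseparable if its underlying undirected graph is nonseparable (has no cut vertex). For a subdigraph $H$ of $D$, an ear of $H$ in $D$ is a directed path $(x_0,\ldots,x_r)$ in $D$ whose end vertices lie in $H$ and whose internal vertices do not lie in $H$. An ear decomposition of a nonseparable strong digraph $D$ is a sequence $(D_0,\ldots,D_k)$ of nonseparable strong subdigraphs of $D$ such that $D_0$ is a directed cycle, $D_{j+1}=D_j\cup P_j$ with $P_j$ an ear of $D_j$ in $D$ for each $j\in\{0,\ldots,k-1\}$, and $D_k=D$. A kernel of a digraph is a set $N$ of vertices that is independent (no arc between two of its vertices) and absorbent (every vertex not in $N$ has an out-neighbour in $N$). *)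

From mathcomp Require Import all_boot.
Set Implicit Arguments. Unset Strict Implicit. Unset Printing Implicit Defensive.

(* A digraph on a finite vertex type V is given by its arc relation E : rel V
   (irreflexive: no loops; a relation: no multiple arcs).
   A (sub)digraph is represented by a pair (vertex set, arc set). *)
Definition digraph (V : finType) := ({set V} * {set V * V})%type.

Section Digraphs.
Variable V : finType.

Definition whole (E : rel V) : digraph V := ([set: V], [set a | E a.1 a.2]).

Definition verts (H : digraph V) := H.1.
Definition arcs (H : digraph V) := H.2.

Definition subdigraph (E : rel V) (H : digraph V) : Prop :=
  forall a, a \in arcs H -> [/\ E a.1 a.2, a.1 \in verts H & a.2 \in verts H].

Definition darc (H : digraph V) : rel V := fun x y => (x, y) \in arcs H.

Definition strong (H : digraph V) : Prop :=
  forall x y, x \in verts H -> y \in verts H -> connect (darc H) x y.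

Definition uarc_in (H : digraph V) (S : {set V}) : rel V :=
  fun x y => [&& x \in S, y \in S & ((x, y) \in arcs H) || ((y, x) \in arcs H)].

Definition uconnected_in (H : digraph V) (S : {set V}) : Prop :=
  forall x y, x \in S -> y \in S -> connect (uarc_in H S) x y.

Definition nonseparable (H : digraph V) : Prop :=
  uconnected_in H (verts H) /\
  forall v, v \in verts H -> uconnected_in H (verts H :\ v).

(* H is a directed cycle: vertex sequence c (no repetition, >= 2 vertices,
   since there are no loops) with arcs c_j -> c_{j+1} cyclically *)
Definition is_dicycle (H : digraph V) : Prop :=
  exists c : seq V, [/\ uniq c, 2 <= size c,
    verts H = [set x | x \in c] &
    arcs H = [set a | (a.1 \in c) && (a.2 == next c a.1)]].

Definition path_arcs (x0 : V) (xs : seq V) : seq (V * V) := zip (x0 :: xs) xs.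

(* (x0 :: xs) is an ear of H in the digraph (V,E): a directed path of D
   (distinct vertices) whose end vertices lie in H and whose internal
   vertices do not lie in H *)
Definition is_ear (E : rel V) (H : digraph V) (x0 : V) (xs : seq V) : Prop :=
  [/\ uniq (x0 :: xs),
      all (fun a => E a.1 a.2) (path_arcs x0 xs),
      x0 \in verts H, last x0 xs \in verts H &
      forall y, y \in belast x0 xs -> y != x0 -> y \notin verts H].

Definition add_ear (H : digraph V) (x0 : V) (xs : seq V) : digraph V :=
  (verts H :|: [set y | y \in x0 :: xs],
   arcs H :|: [set a | a \in path_arcs x0 xs]).

(* ear decomposition (D_0, ..., D_k) of (V,E) with ears P_j = x0 j :: xs j *)
Definition ear_decomposition (E : rel V) (k : nat) (Ds : nat -> digraph V)
    (x0 : nat -> V) (xs : nat -> seq V) : Prop :=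
  [/\ forall j, j <= k -> [/\ subdigraph E (Ds j), nonseparable (Ds j) & strong (Ds j)],
      is_dicycle (Ds 0),
      forall j, j < k -> is_ear E (Ds j) (x0 j) (xs j) /\
                        Ds j.+1 = add_ear (Ds j) (x0 j) (xs j) &
      Ds k = whole E].

Definition kernel (H : digraph V) (N : {set V}) : Prop :=
  [/\ N \subset verts H,
      forall x y, x \in N -> y \in N -> (x, y) \notin arcs H &
      forall x, x \in verts H -> x \notin N -> exists2 y, y \in N & (x, y) \in arcs H].

End Digraphs.

From mathcomp Require Import all_boot.
Set Implicit Arguments. Unset Strict Implicit. Unset Printing Implicit Defensive.

(* Extend the kernel N of D_i along the ear P_i = x_0 ... x_r backwards from
   x_r, alternately: an interior vertex x_j is added iff (x_r \in N) differs
   from the parity of r - j.  Every arc x_j x_(j+1) with j > 0 then has exactly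
   one end in the new set, and an interior vertex left out is absorbed by
   x_(j+1).  So the extension is a kernel of D_(i+1) unless x_0 \in N and x_1
   is added, i.e. unless x_0 \in N and (x_r \in N iff r is odd). *)

Lemma path_arcsP (V : finType) (x0 : V) (xs : seq V) u v :
  reflect (exists2 j, j < size xs &
             (u, v) = (nth x0 (x0 :: xs) j, nth x0 (x0 :: xs) j.+1))
          ((u, v) \in path_arcs x0 xs).
Proof.
rewrite /path_arcs; have size_arcs : size (zip (x0 :: xs) xs) = size xs.
  by rewrite size2_zip.
apply: (iffP (nthP (x0, x0))) => -[j]; rewrite size_arcs => lt_j_xs eq_uv.
  by exists j; rewrite // -eq_uv nth_zip_cond size_arcs lt_j_xs.
by exists j; rewrite ?size_arcs // eq_uv nth_zip_cond size_arcs lt_j_xs.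
Qed.

Section EarKernel.
Variables (V : finType) (E : rel V) (H : digraph V) (a : V) (s : seq V).
Variable N : {set V}.
Hypotheses (subH : subdigraph E H) (earH : is_ear E H a s) (kerN : kernel H N).

Local Notation r := (size s).
Local Notation b := (last a s \in N).
Local Notation x j := (nth a (a :: s) j).

Definition ear_kernel : {set V} :=
  [set y | if y \in verts H then y \in N
           else (y \in a :: s) && (b (+) odd (r - index y (a :: s)))].

Let first_in : a \in verts H. Proof. by case: earH. Qed.
Let last_in : last a s \in verts H. Proof. by case: earH. Qed.

Lemma ear_vertex_last : x r = last a s.
Proof. exact: nth_last. Qed.

Lemma index_ear_vertex j : j <= r -> index (x j) (a :: s) = j.
Proof. by case: earH => uniq_p _ _ _ _ le_j_r; rewrite index_uniq. Qed.

Lemma ear_vertex_notin j : 0 < j < r -> x j \notin verts H.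
Proof.
case: earH => uniq_p _ _ _ inner_out /andP[j_gt0 lt_j_r]; apply: inner_out.
  by rewrite lastI nth_rcons size_belast lt_j_r mem_nth ?size_belast.
by rewrite -[a]/(x 0) nth_uniq // -?lt0n // ltnW.
Qed.

Lemma mem_ear_kernel_verts y : y \in verts H -> (y \in ear_kernel) = (y \in N).
Proof. by rewrite inE => ->. Qed.

Lemma mem_ear_kernel_inner j :
  0 < j < r -> (x j \in ear_kernel) = b (+) odd (r - j).
Proof.
move=> j_inner; have /andP[_ /ltnW le_j_r] := j_inner.
by rewrite inE (negbTE (ear_vertex_notin j_inner)) mem_nth // index_ear_vertex.
Qed.

Lemma ear_kernel_alternates j :
  0 < j < r -> (x j \in ear_kernel) = ~~ (x j.+1 \in ear_kernel).
Proof.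
move=> j_inner; have /andP[j_gt0 lt_j_r] := j_inner.
rewrite mem_ear_kernel_inner //; case: (ltngtP j.+1 r) => [lt_j1_r | | j1_eq_r].
- by rewrite mem_ear_kernel_inner ?lt_j1_r // -subnSK //= addbN.
- by rewrite ltnNge lt_j_r.
- rewrite j1_eq_r ear_vertex_last mem_ear_kernel_verts //.
  by rewrite -j1_eq_r subSnn addbT.
Qed.

Lemma mem_ear_kernel_second : 0 < r -> (x 1 \in ear_kernel) = b (+) ~~ odd r.
Proof.
case: (ltngtP 1 r) => [lt_1_r | | r_eq1] // _.
  rewrite mem_ear_kernel_inner ?lt_1_r // subn1.
  by rewrite -[in RHS](prednK (ltnW lt_1_r)) /= negbK.
by rewrite r_eq1 ear_vertex_last mem_ear_kernel_verts // -r_eq1 addbF.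
Qed.

Lemma kernel_add_ear :
  ~~ ((a \in N) && (x 1 \in ear_kernel)) -> kernel (add_ear H a s) ear_kernel.
Proof.
have [sub_N indep_N absorb_N] := kerN; move=> no_conflict; split.
- apply/subsetP => y; rewrite in_setU !in_set.
  by case: ifP => [y_H _ | _ /andP[y_p _]]; apply/orP; [left | right].
- move=> u v u_in v_in; rewrite !inE; apply/negP.
  case/orP=> [uv_H | /path_arcsP[j lt_j_r [eq_u eq_v]]].
    have [_ u_H v_H] := subH uv_H.
    rewrite !mem_ear_kernel_verts // in u_in v_in.
    by move: (indep_N u v u_in v_in); rewrite uv_H.
  move: u_in v_in; rewrite eq_u eq_v {eq_u eq_v}.
  case: j lt_j_r => [|j] lt_j_r.
    rewrite mem_ear_kernel_verts // => a_N x1_in.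
    by rewrite a_N x1_in in no_conflict.
  by rewrite ear_kernel_alternates // => /negP.
- move=> y y_V y_notin; case y_H: (y \in verts H).
    rewrite mem_ear_kernel_verts // in y_notin.
    have [z z_N yz] := absorb_N y y_H y_notin.
    by exists z; rewrite ?mem_ear_kernel_verts ?(subsetP sub_N) // inE yz.
  move: y_V; rewrite in_setU y_H in_set => /(@nthP _ _ _ a)[j lt_j_p eq_y].
  have j_inner : 0 < j < r.
    rewrite lt0n ltn_neqAle -ltnS lt_j_p andbT.
    by apply/andP; split; apply: contraFneq y_H => eq_j;
      rewrite -eq_y eq_j ?ear_vertex_last.
  rewrite -eq_y ear_kernel_alternates // negbK in y_notin.
  exists (x j.+1) => //; rewrite in_setU in_set; apply/orP; right.
  by apply/path_arcsP; exists j; rewrite ?eq_y //; case/andP: j_inner.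
Qed.

Lemma ear_kernel_parity :
  0 < r -> ~ (exists N', kernel (add_ear H a s) N') -> a \in N /\ b = odd r.
Proof.
move=> r_gt0 no_kernel.
have /andP[a_N] : (a \in N) && (x 1 \in ear_kernel).
  apply/negPn/negP => no_conflict; apply: no_kernel.
  by exists ear_kernel; apply: kernel_add_ear.
rewrite mem_ear_kernel_second // => parity; split => //.
by move: parity; case: b; case: (odd r).
Qed.

End EarKernel.

Theorem mainTheorem12 (V : finType) (E : rel V) (Eirr : irreflexive E)
  (Dstrong : strong (whole E)) (Dnonsep : nonseparable (whole E))
  (k : nat) (Ds : nat -> digraph V) (x0 : nat -> V) (xs : nat -> seq V)
  (hdec : ear_decomposition E k Ds x0 xs)
  (i : nat) (hi : i < k) (hlen : 2 <= size (xs i))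
  (N : {set V}) (hN : kernel (Ds i) N)
  (hno : ~ exists N' : {set V}, kernel (Ds i.+1) N') :
  (x0 i \in N /\ last (x0 i) (xs i) \in N /\ odd (size (xs i))) \/
  (x0 i \in N /\ last (x0 i) (xs i) \notin N /\ ~~ odd (size (xs i))).
Proof.
case: hdec => sub_Ds _ ears _.
have [ear_i Ds_succ] := ears i hi.
have [sub_i _ _] := sub_Ds i (ltnW hi).
rewrite Ds_succ in hno.
have [x0_N last_N] := ear_kernel_parity sub_i ear_i hN (ltnW hlen) hno.
by rewrite last_N; case: (odd _); [left | right].
Qed.
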